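(* Consider a normal extremal (with $M=1$) starting at the identity, with covector data $\varphi_i=\psi_i(0)$, $i=1,\dots,4$. Then for all $t\in\mathbb R$: (i) $\psi_4\equiv\varphi_4$, $\psi_3=\varphi_3+\tfrac12\varphi_4x$, $\psi_2=\varphi_2+\tfrac12\varphi_3x+\tfrac16\varphi_4x^2$, $\psi_1=\varphi_1-\tfrac12\varphi_3y-\tfrac16\varphi_4(xy+3z)$, and hence $h_1=\varphi_1-(\varphi_3+\tfrac12\varphi_4x)y-\varphi_4z$, $h_2=\varphi_2+(\varphi_3+\tfrac12\varphi_4x)x$; (ii) a.e. $\dot h_1=-(\varphi_3+\varphi_4x)u_2$, $\dot h_2=(\varphi_3+\varphi_4x)u_1$, and the quantity $\tfrac12(\varphi_3+\varphi_4x(t))^2-\varphi_4h_2(t)$ is constant, equal to $\tfrac12\varphi_3^2-\varphi_2\varphi_4$; (iii) $\varphi_1x(t)+\varphi_2y(t)+\bigl(2\varphi_3+\tfrac12\varphi_4x(t)\bigr)z(t)+3\varphi_4v(t)=t$; (iv) with $\theta(t)$ the angle function, $\theta$ is continuously differentiable and $\varphi_3+\varphi_4x(t)=r^2(\theta(t))\dot\theta(t)$, so $\dot\theta^2=\dfrac{\varphi_3^2+2\varphi_4(r(\theta)\sin\theta-\varphi_2)}{r^4(\theta)}$.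
   Context: Let $\mathfrak g$ be the Engel algebra with basis $X,Y,Z,V$, $[X,Y]=Z$, $[X,Z]=V$, all other brackets of basis elements zero; $G$ the corresponding connected simply connected Lie group, with coordinates of the first kind $(x,y,z,v)$ ($\exp(xX+yY+zZ+vV)\leftrightarrow(x,y,z,v)$, identity $=0$). Let $F$ be an arbitrary norm on $\mathbb R^2$, $U=\{u\in\mathbb R^2:F(u)\le1\}$, where $(u_1,u_2)$ is identified with $u_1X(e)+u_2Y(e)$. The left-invariant time-optimal control system is $\dot x=u_1,\ \dot y=u_2,\ \dot z=\tfrac12(xu_2-yu_1),\ \dot v=-\tfrac12(z+\tfrac16xy)u_1+\tfrac1{12}x^2u_2$, with measurable control $u(t)\in U$ and $x(0)=y(0)=z(0)=v(0)=0$. An extremal is a trajectory $(x,y,z,v)(t)$, $t\in\mathbb R$, with control $u(t)$, for which there is a nowhere vanishing absolutely continuous $\psi(t)=(\psi_1,\psi_2,\psi_3,\psi_4)(t)$ satisfying a.e. $\dot\psi_1=\tfrac1{12}\psi_4yu_1-(\tfrac12\psi_3+\tfrac16\psi_4x)u_2$, $\dot\psi_2=(\tfrac12\psi_3+\tfrac1{12}\psi_4x)u_1$, $\dot\psi_3=\tfrac12\psi_4u_1$, $\dot\psi_4=0$, and the maximum condition $h_1(t)u_1(t)+h_2(t)u_2(t)=\max_{u\in U}(h_1(t)u_1+h_2(t)u_2)=M$ for a.e. $t$, where $h_1=\psi_1-\tfrac12\psi_3y-\tfrac1{12}\psi_4xy-\tfrac12\psi_4z$, $h_2=\psi_2+\tfrac12\psi_3x+\tfrac1{12}\psi_4x^2$,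 and $M\ge0$ is a constant. It is abnormal if $M=0$ and normal if $M>0$; in the normal case $\psi$ is rescaled so that $M=1$. Write $\varphi_i=\psi_i(0)$. Let $F_U(h)=\max_{u\in U}h\cdot u$ and $U^*=\{h:F_U(h)\le1\}$ (polar figure). Let $r(\theta)>0$ be the polar equation of $\partial U^*$, i.e. $F_U(r(\theta)\cos\theta,r(\theta)\sin\theta)=1$. For $M=1$, $(h_1(t),h_2(t))\in\partial U^*$, and $\theta(t)$ denotes a continuous function with $(h_1(t),h_2(t))=r(\theta(t))(\cos\theta(t),\sin\theta(t))$. *)

From Stdlib Require Import Reals Lra.
Open Scope R_scope.

Fixpoint rsum (f : nat -> R) (n : nat) : R :=
  match n with O => 0 | S k => rsum f k + f k end.

Definition negligible (A : R -> Prop) : Prop :=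
  forall eps, 0 < eps -> exists a b : nat -> R,
    (forall n, a n <= b n) /\
    (forall t, A t -> exists n, a n < t < b n) /\
    (forall N, rsum (fun n => b n - a n) N < eps).

Definition ae (P : R -> Prop) : Prop := negligible (fun t => ~ P t).

Definition abs_cont_on (f : R -> R) (a b : R) : Prop :=
  forall eps, 0 < eps -> exists delta, 0 < delta /\
    forall (n : nat) (c d : nat -> R),
      (forall i, (i < n)%nat -> a <= c i /\ c i <= d i /\ d i <= b) ->
      (forall i, (S i < n)%nat -> d i <= c (S i)) ->
      rsum (fun i => d i - c i) n < delta ->
      rsum (fun i => Rabs (f (d i) - f (c i))) n < eps.

Definition loc_abs_cont (f : R -> R) : Prop :=
  forall a b, a <= b -> abs_cont_on f a b.

Definition is_norm2 (F : R -> R -> R) : Prop :=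
  (forall w1 w2, 0 <= F w1 w2) /\
  (forall w1 w2, F w1 w2 = 0 -> w1 = 0 /\ w2 = 0) /\
  (forall a w1 w2, F (a * w1) (a * w2) = Rabs a * F w1 w2) /\
  (forall w1 w2 v1 v2, F (w1 + v1) (w2 + v2) <= F w1 w2 + F v1 v2).

(* F_U(h1,h2) = m, where F_U(h) = max_{u in U} h.u, U = {F <= 1} *)
Definition FU_is (F : R -> R -> R) (h1 h2 m : R) : Prop :=
  is_lub (fun s => exists w1 w2, F w1 w2 <= 1 /\ s = h1 * w1 + h2 * w2) m.

Definition ham1 (p1 p3 p4 x y z : R) : R :=
  p1 - /2 * p3 * y - /12 * p4 * x * y - /2 * p4 * z.
Definition ham2 (p2 p3 p4 x : R) : R :=
  p2 + /2 * p3 * x + /12 * p4 * x ^ 2.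

(* Each of the formulas (i)-(iii) is a function of t whose derivative vanishes almost
   everywhere by the state, adjoint and maximum equations; since it is absolutely
   continuous it is constant, and its value at t = 0 is read off the initial data.
   For (iv), write (h1, h2) = r(θ)(cos θ, sin θ): then θ' = (h1 h2' - h2 h1')/(h1² + h2²)
   wherever h is differentiable, which by (ii) and h1 u1 + h2 u2 = 1 equals the
   continuous function (φ3 + φ4 x)/r(θ)²; θ is absolutely continuous because h is and
   r is bounded below, so θ is in fact C¹ with that derivative, and (ii) turns θ'² into
   the stated expression. *)

From Stdlib Require Import Reals Lra Lia Classical FunctionalExtensionality.
Open Scope R_scope.

Lemma rsum_ext f g m : (forall i, (i < m)%nat -> f i = g i) -> rsum f m = rsum g m.
Proof.
  induction m as [|m IH]; intros H; simpl; auto.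
  rewrite IH, (H m); [reflexivity|lia|intros; apply H; lia].
Qed.

Lemma rsum_le f g m : (forall i, (i < m)%nat -> f i <= g i) -> rsum f m <= rsum g m.
Proof.
  induction m as [|m IH]; intros H; simpl; [lra|].
  assert (f m <= g m) by (apply H; lia).
  assert (rsum f m <= rsum g m) by (apply IH; intros; apply H; lia). lra.
Qed.

Lemma rsum_plus f g m : rsum (fun i => f i + g i) m = rsum f m + rsum g m.
Proof. induction m as [|m IH]; simpl; [lra|]. rewrite IH; ring. Qed.

Lemma rsum_scal k f m : rsum (fun i => k * f i) m = k * rsum f m.
Proof. induction m as [|m IH]; simpl; [ring|]. rewrite IH; ring. Qed.

Lemma rsum_nonneg f m : (forall i, (i < m)%nat -> 0 <= f i) -> 0 <= rsum f m.
Proof.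
  intros H. apply Rle_trans with (rsum (fun _ => 0) m).
  - clear H. induction m as [|m IH]; simpl; lra.
  - apply rsum_le, H.
Qed.

Lemma rsum_mono f n m : (forall i, 0 <= f i) -> (n <= m)%nat -> rsum f n <= rsum f m.
Proof. intros H Hle. induction Hle; simpl; [lra|]. specialize (H m). lra. Qed.

Lemma rsum_term f m i : (forall j, (j < m)%nat -> 0 <= f j) -> (i < m)%nat -> f i <= rsum f m.
Proof.
  induction m as [|m IH]; intros H Hi; [lia|]. simpl.
  assert (0 <= rsum f m) by (apply rsum_nonneg; intros; apply H; lia).
  destruct (Nat.eq_dec i m) as [->|Him]; [lra|].
  assert (f i <= rsum f m) by (apply IH; [intros; apply H|]; lia).
  assert (0 <= f m) by (apply H; lia). lra.
Qed.

Lemma rsum_add_at B k w N : (k < N)%nat ->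
  rsum (fun n => B n + (if Nat.eqb n k then w else 0)) N = rsum B N + w.
Proof.
  induction N as [|N IH]; intros H; [lia|]. simpl.
  destruct (Nat.eq_dec k N) as [->|HkN].
  - rewrite Nat.eqb_refl, (rsum_ext _ B); [ring|].
    intros i Hi. destruct (Nat.eqb_spec i N); [lia|ring].
  - rewrite IH by lia. destruct (Nat.eqb_spec N k); [lia|ring].
Qed.

Definition interleave (f g : nat -> R) (n : nat) : R :=
  if Nat.even n then f (Nat.div2 n) else g (Nat.div2 n).

Lemma interleave_even f g k : interleave f g (2 * k) = f k.
Proof. unfold interleave. rewrite Nat.even_mul, Nat.div2_double. reflexivity. Qed.

Lemma interleave_odd f g k : interleave f g (S (2 * k)) = g k.
Proof.
  unfold interleave. rewrite Nat.even_succ, Nat.odd_mul, Nat.div2_succ_double.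
  reflexivity.
Qed.

Lemma rsum_interleave f g k : rsum (interleave f g) (2 * k) = rsum f k + rsum g k.
Proof.
  induction k as [|k IH]; [simpl; ring|].
  replace (2 * S k)%nat with (S (S (2 * k))) by lia.
  change (rsum (interleave f g) (S (S (2 * k)))) with
    (rsum (interleave f g) (2 * k) + interleave f g (2 * k) + interleave f g (S (2 * k))).
  rewrite IH, interleave_even, interleave_odd. simpl. ring.
Qed.

Lemma negligible_sub (A B : R -> Prop) :
  (forall t, A t -> B t) -> negligible B -> negligible A.
Proof.
  intros H HB eps He. destruct (HB eps He) as (a & b & H1 & H2 & H3).
  exists a, b. auto.
Qed.

Lemma negligible_union (A B : R -> Prop) :
  negligible A -> negligible B -> negligible (fun t => A t \/ B t).
Proof.
  intros HA HB eps He.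
  destruct (HA (eps / 2) ltac:(lra)) as (a1 & b1 & H1 & H2 & H3).
  destruct (HB (eps / 2) ltac:(lra)) as (a2 & b2 & K1 & K2 & K3).
  exists (interleave a1 a2), (interleave b1 b2). split; [|split].
  - intros n. unfold interleave. destruct (Nat.even n); auto.
  - intros t [Ht|Ht].
    + destruct (H2 t Ht) as [n Hn]. exists (2 * n)%nat. rewrite !interleave_even. auto.
    + destruct (K2 t Ht) as [n Hn]. exists (S (2 * n)). rewrite !interleave_odd. auto.
  - intros N.
    replace (fun n => interleave b1 b2 n - interleave a1 a2 n) with
      (interleave (fun n => b1 n - a1 n) (fun n => b2 n - a2 n))
      by (extensionality n; unfold interleave; destruct (Nat.even n); auto).
    apply Rle_lt_trans with (rsum (interleave (fun n => b1 n - a1 n) (fun n => b2 n - a2 n)) (2 * N)).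
    + apply rsum_mono; [|lia]. intros i. unfold interleave.
      destruct (Nat.even i); [specialize (H1 (Nat.div2 i))|specialize (K1 (Nat.div2 i))]; lra.
    + rewrite rsum_interleave. specialize (H3 N). specialize (K3 N). lra.
Qed.

Lemma ae_mono (P Q : R -> Prop) : (forall t, P t -> Q t) -> ae P -> ae Q.
Proof. intros H. apply negligible_sub. intros t HQ HP. exact (HQ (H t HP)). Qed.

Lemma ae_and (P Q : R -> Prop) : ae P -> ae Q -> ae (fun t => P t /\ Q t).
Proof.
  intros HP HQ. apply negligible_sub with (fun t => ~ P t \/ ~ Q t).
  - intros t H. destruct (classic (P t)); tauto.
  - apply negligible_union; auto.
Qed.

(** * A mean value inequality for absolutely continuous functions *)

Lemma real_induction (P : R -> Prop) (a b : R) : a <= b -> P a ->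
  (forall t, a <= t <= b -> exists g, 0 < g /\ forall s0 s1, a <= s0 -> s0 <= t <= s1 ->
      s1 <= b -> s1 - s0 < g -> P s0 -> P s1) -> P b.
Proof.
  intros Hab Pa Hstep.
  set (S := fun s => a <= s <= b /\ forall u, a <= u <= s -> P u).
  assert (Sa : S a) by (split; [lra|]; intros u Hu; replace u with a by lra; auto).
  destruct (completeness S) as [c [Hub Hlub]].
  { exists b. intros s [Hs _]. lra. }
  { exists a. exact Sa. }
  assert (Hac : a <= c) by (apply Hub, Sa).
  assert (Hcb : c <= b) by (apply Hlub; intros s [Hs _]; lra).
  assert (Hbelow : forall u, u < c -> exists s, S s /\ u < s).
  { intros u Hu. apply NNPP. intro Hn.
    assert (c <= u); [|lra].
    apply Hlub. intros s Hs. apply Rnot_lt_le. intro Hlt. apply Hn. exists s; auto. }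
  destruct (Hstep c (conj Hac Hcb)) as [g [Hg Hst]].
  assert (Hall : forall u, a <= u <= c -> P u).
  { intros u Hu. destruct (Rlt_dec u c) as [Hlt|Hge].
    - destruct (Hbelow u Hlt) as [s [[_ Hs] Hus]]. apply Hs. lra.
    - replace u with c by lra.
      destruct (Req_dec a c) as [<-|Hac_ne]; [exact Pa|].
      destruct (Hbelow (Rmax a (c - g / 2))) as [s [[Hs1 Hs2] Hus]].
      { unfold Rmax; destruct (Rle_dec a (c - g / 2)); lra. }
      assert (s <= c) by (apply Hub; split; auto).
      pose proof (Rmax_l a (c - g / 2)). pose proof (Rmax_r a (c - g / 2)).
      apply (Hst s c); try lra. apply Hs2. lra. }
  destruct (Req_dec c b) as [<-|Hcb_ne]; [apply Hall; lra|]. exfalso.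
  pose proof (Rmin_l b (c + g / 2)). pose proof (Rmin_r b (c + g / 2)).
  assert (c < Rmin b (c + g / 2)) by (unfold Rmin; destruct (Rle_dec b (c + g / 2)); lra).
  set (s' := Rmin b (c + g / 2)) in *.
  assert (S s').
  { split; [lra|]. intros u Hu. destruct (Rle_dec u c); [apply Hall; lra|].
    apply (Hst c u); try lra. apply Hall. lra. }
  assert (s' <= c) by (apply Hub; auto). lra.
Qed.

Lemma derivable_increment_le f t l e : derivable_pt_lim f t l -> 0 < e ->
  exists g, 0 < g /\ forall s0 s1, s0 <= t <= s1 -> s1 - s0 < g ->
    Rabs (f s1 - f s0) <= (Rabs l + e) * (s1 - s0).
Proof.
  intros Hd He. destruct (Hd e He) as [[g Hg] H]. simpl in H.
  assert (Hloc : forall s, Rabs (s - t) < g -> Rabs (f s - f t) <= (Rabs l + e) * Rabs (s - t)).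
  { intros s Hs. destruct (Req_dec s t) as [->|Hst].
    - rewrite !Rminus_diag, !Rabs_R0. lra.
    - specialize (H (s - t) ltac:(lra) Hs). replace (t + (s - t)) with s in H by ring.
      replace (f s - f t) with (((f s - f t) / (s - t) - l) * (s - t) + l * (s - t))
        by (field; lra).
      eapply Rle_trans; [apply Rabs_triang|]. rewrite !Rabs_mult.
      pose proof (Rabs_pos (s - t)). nra. }
  exists g. split; [exact Hg|]. intros s0 s1 Hs Hlen.
  replace (f s1 - f s0) with ((f s1 - f t) - (f s0 - f t)) by ring.
  eapply Rle_trans; [apply Rabs_triang|]. rewrite Rabs_Ropp.
  assert (Rabs (f s1 - f t) <= (Rabs l + e) * (s1 - t)) by
    (rewrite <- (Rabs_pos_eq (s1 - t)) by lra; apply Hloc; rewrite Rabs_pos_eq; lra).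
  assert (Rabs (f s0 - f t) <= (Rabs l + e) * - (s0 - t)) by
    (rewrite <- (Rabs_left1 (s0 - t)) by lra; apply Hloc; rewrite Rabs_left1; lra).
  nra.
Qed.

(* The increment of [f] on [a, s] is at most [(K + e) (s - a)] plus the increments of [f]
   on finitely many non-overlapping intervals [c i, d i] lying inside intervals of the
   cover [(aa n, bb n)] of the bad set; [B n] bounds the total length taken from the n-th
   cover interval, so the total length of the [c i, d i] is below that of the cover. *)
Definition covered_increment (f : R -> R) (a K e : R) (aa bb : nat -> R) (s : R) : Prop :=
  exists (m : nat) (c d B : nat -> R) (N : nat),
    (forall i, (i < m)%nat -> a <= c i /\ c i <= d i /\ d i <= s) /\
    (forall i, (S i < m)%nat -> d i <= c (S i)) /\
    rsum (fun i => d i - c i) m <= rsum B N /\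
    (forall n, 0 <= B n /\ B n <= Rmax 0 (Rmin s (bb n) - aa n)) /\
    Rabs (f s - f a) <= (K + e) * (s - a) + rsum (fun i => Rabs (f (d i) - f (c i))) m.

Lemma Rmax0_Rmin_le s0 s1 b a : s0 <= s1 -> Rmax 0 (Rmin s0 b - a) <= Rmax 0 (Rmin s1 b - a).
Proof. intros. unfold Rmax, Rmin. repeat destruct Rle_dec; lra. Qed.

Lemma covered_increment_start f a K e aa bb : covered_increment f a K e aa bb a.
Proof.
  exists O, (fun _ => 0), (fun _ => 0), (fun _ => 0), O. simpl.
  repeat split; intros; try lia; try lra; try apply Rmax_l.
  rewrite Rminus_diag, Rabs_R0. lra.
Qed.

Lemma covered_increment_good f a K e aa bb s0 s1 : 0 <= K + e -> s0 <= s1 ->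
  Rabs (f s1 - f s0) <= (K + e) * (s1 - s0) ->
  covered_increment f a K e aa bb s0 -> covered_increment f a K e aa bb s1.
Proof.
  intros HKe Hs Hf (m & c & d & B & N & I1 & I2 & I3 & I4 & I5).
  exists m, c, d, B, N. split; [|split; [|split; [|split]]]; auto.
  - intros i Hi. destruct (I1 i Hi). lra.
  - intros n. destruct (I4 n). split; auto.
    eapply Rle_trans; [eassumption|]. apply Rmax0_Rmin_le; auto.
  - replace (f s1 - f a) with ((f s1 - f s0) + (f s0 - f a)) by ring.
    eapply Rle_trans; [apply Rabs_triang|]. lra.
Qed.

Lemma covered_increment_bad f a K e aa bb s0 s1 k : 0 <= K + e -> a <= s0 -> s0 <= s1 ->
  aa k < s0 -> s1 < bb k ->
  covered_increment f a K e aa bb s0 -> covered_increment f a K e aa bb s1.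
Proof.
  intros HKe Ha Hs Hk1 Hk2 (m & c & d & B & N & I1 & I2 & I3 & I4 & I5).
  exists (S m), (fun i => if Nat.eqb i m then s0 else c i),
    (fun i => if Nat.eqb i m then s1 else d i),
    (fun n => B n + (if Nat.eqb n k then s1 - s0 else 0)), (Nat.max N (S k)).
  split; [|split; [|split; [|split]]].
  - intros i Hi. destruct (Nat.eqb_spec i m); [lra|]. destruct (I1 i ltac:(lia)). lra.
  - intros i Hi. destruct (Nat.eqb_spec i m); [lia|]. destruct (Nat.eqb_spec (S i) m).
    + destruct (I1 i ltac:(lia)). lra.
    + apply I2; lia.
  - simpl. rewrite Nat.eqb_refl, (rsum_ext _ (fun i => d i - c i)), rsum_add_at by
      (lia || (intros i Hi; destruct (Nat.eqb_spec i m); [lia|auto])).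
    assert (rsum B N <= rsum B (Nat.max N (S k))) by
      (apply rsum_mono; [intros n; apply I4|lia]).
    lra.
  - intros n. destruct (I4 n) as [J1 J2]. destruct (Nat.eqb_spec n k) as [->|].
    + split; [lra|]. revert J2. unfold Rmax, Rmin. repeat destruct Rle_dec; lra.
    + split; [lra|]. rewrite Rplus_0_r. eapply Rle_trans; [exact J2|].
      apply Rmax0_Rmin_le; auto.
  - simpl. rewrite Nat.eqb_refl, (rsum_ext _ (fun i => Rabs (f (d i) - f (c i)))) by
      (intros i Hi; destruct (Nat.eqb_spec i m); [lia|auto]).
    replace (f s1 - f a) with ((f s1 - f s0) + (f s0 - f a)) by ring.
    eapply Rle_trans; [apply Rabs_triang|]. nra.
Qed.

Lemma mean_value_ineq_eps (f : R -> R) (a b K e : R) : a <= b -> 0 <= K -> 0 < e ->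
  abs_cont_on f a b ->
  negligible (fun t => a <= t <= b /\ ~ (exists l, derivable_pt_lim f t l /\ Rabs l <= K)) ->
  Rabs (f b - f a) <= (K + e) * (b - a) + e.
Proof.
  intros Hab HK He Hac Hneg.
  destruct (Hac e He) as [del [Hdel Hd]].
  destruct (Hneg del Hdel) as (aa & bb & C1 & C2 & C3).
  assert (HI : covered_increment f a K e aa bb b).
  { apply real_induction with a; auto using covered_increment_start.
    intros t Ht.
    destruct (classic (exists l, derivable_pt_lim f t l /\ Rabs l <= K)) as [[l [Hl1 Hl2]]|Hbad].
    - destruct (derivable_increment_le f t l e Hl1 He) as [g [Hg Hgb]].
      exists g. split; auto. intros s0 s1 Ha0 Hst Hb1 Hg01.
      apply covered_increment_good; try lra.
      eapply Rle_trans; [apply Hgb; lra|]. apply Rmult_le_compat_r; lra.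
    - destruct (C2 t (conj Ht Hbad)) as [k Hk].
      exists (Rmin (t - aa k) (bb k - t)). split; [unfold Rmin; destruct Rle_dec; lra|].
      pose proof (Rmin_l (t - aa k) (bb k - t)). pose proof (Rmin_r (t - aa k) (bb k - t)).
      intros s0 s1 Ha0 Hst Hb1 Hg01. apply covered_increment_bad with k; lra. }
  destruct HI as (m & c & d & B & N & I1 & I2 & I3 & I4 & I5).
  assert (rsum (fun i => Rabs (f (d i) - f (c i))) m < e); [|lra].
  apply Hd; auto.
  eapply Rle_lt_trans; [exact I3|]. eapply Rle_lt_trans; [|apply (C3 N)].
  apply rsum_le. intros n _. destruct (I4 n) as [_ J]. specialize (C1 n). revert J.
  unfold Rmax, Rmin; repeat destruct Rle_dec; lra.
Qed.

Lemma abs_cont_mean_value_ineq (f : R -> R) (a b K : R) : a <= b -> 0 <= K ->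
  abs_cont_on f a b ->
  negligible (fun t => a <= t <= b /\ ~ (exists l, derivable_pt_lim f t l /\ Rabs l <= K)) ->
  Rabs (f b - f a) <= K * (b - a).
Proof.
  intros Hab HK Hac Hneg. apply Rle_plus_epsilon. intros eps Heps.
  set (e := eps / (b - a + 1)).
  assert (He : 0 < e) by (apply Rdiv_lt_0_compat; lra).
  assert (Hee : e * (b - a + 1) = eps) by (unfold e; field; lra).
  pose proof (mean_value_ineq_eps f a b K e Hab HK He Hac Hneg). nra.
Qed.

(** * Locally absolutely continuous functions *)

Lemma abs_cont_on_single f a b : abs_cont_on f a b -> forall e, 0 < e -> exists d, 0 < d /\
  forall c1 d1, a <= c1 -> c1 <= d1 -> d1 <= b -> d1 - c1 < d -> Rabs (f d1 - f c1) < e.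
Proof.
  intros H e He. destruct (H e He) as [d [Hd Hf]]. exists d; split; auto.
  intros c1 d1 H1 H2 H3 H4.
  specialize (Hf 1%nat (fun _ => c1) (fun _ => d1)). simpl in Hf.
  enough (0 + Rabs (f d1 - f c1) < e) by lra.
  apply Hf; intros; try lia; lra.
Qed.

Lemma loc_abs_cont_continuity f : loc_abs_cont f -> continuity f.
Proof.
  intros H t e He.
  destruct (abs_cont_on_single f (t - 1) (t + 1) (H (t - 1) (t + 1) ltac:(lra)) e He) as [d [Hd Hf]].
  pose proof (Rmin_l d 1). pose proof (Rmin_r d 1).
  exists (Rmin d 1). split; [unfold Rmin; destruct Rle_dec; lra|].
  intros s [_ Hs]. simpl in *. unfold R_dist in *.
  destruct (Rle_dec t s).
  - rewrite Rabs_right in Hs by lra. apply Hf; lra.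
  - rewrite Rabs_left in Hs by lra. rewrite <- Rabs_Ropp, Ropp_minus_distr. apply Hf; lra.
Qed.

Lemma continuity_bounded f a b : continuity f -> a <= b ->
  exists M, forall t, a <= t <= b -> Rabs (f t) <= M.
Proof.
  intros Hc Hab.
  destruct (continuity_ab_maj f a b Hab (fun c _ => Hc c)) as [x1 [H1 _]].
  destruct (continuity_ab_min f a b Hab (fun c _ => Hc c)) as [x2 [H2 _]].
  exists (Rabs (f x1) + Rabs (f x2)). intros t Ht. specialize (H1 t Ht). specialize (H2 t Ht).
  unfold Rabs; repeat destruct Rcase_abs; lra.
Qed.

Lemma abs_cont_on_dominated f g1 g2 a b rho C :
  abs_cont_on g1 a b -> abs_cont_on g2 a b -> 0 < rho -> 0 <= C ->
  (forall c d, a <= c -> c <= d -> d <= b -> d - c < rho ->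
     Rabs (f d - f c) <= C * (Rabs (g1 d - g1 c) + Rabs (g2 d - g2 c))) ->
  abs_cont_on f a b.
Proof.
  intros H1 H2 Hr HC Hdom e He.
  set (e' := e / (2 * (C + 1))).
  assert (He' : 0 < e') by (apply Rdiv_lt_0_compat; lra).
  assert (HCe : C * e' < e / 2).
  { apply Rlt_le_trans with ((C + 1) * e'); [nra|]. right. unfold e'. field. lra. }
  destruct (H1 e' He') as [d1 [Hd1 K1]]. destruct (H2 e' He') as [d2 [Hd2 K2]].
  pose proof (Rmin_l rho (Rmin d1 d2)). pose proof (Rmin_r rho (Rmin d1 d2)).
  pose proof (Rmin_l d1 d2). pose proof (Rmin_r d1 d2).
  exists (Rmin rho (Rmin d1 d2)). split; [unfold Rmin; repeat destruct Rle_dec; lra|].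
  intros n c d Hcd Hord Hs.
  specialize (K1 n c d Hcd Hord ltac:(lra)). specialize (K2 n c d Hcd Hord ltac:(lra)).
  set (S1 := rsum (fun i => Rabs (g1 (d i) - g1 (c i))) n) in *.
  set (S2 := rsum (fun i => Rabs (g2 (d i) - g2 (c i))) n) in *.
  apply Rle_lt_trans with (C * (S1 + S2)).
  - unfold S1, S2. rewrite <- rsum_plus, <- rsum_scal. apply rsum_le. intros i Hi.
    destruct (Hcd i Hi) as (A1 & A2 & A3). apply Hdom; try lra.
    assert (d i - c i <= rsum (fun i => d i - c i) n); [|lra].
    apply (rsum_term (fun i => d i - c i)); auto. intros j Hj. destruct (Hcd j Hj); lra.
  - assert (0 <= S1) by (apply rsum_nonneg; intros; apply Rabs_pos).
    assert (0 <= S2) by (apply rsum_nonneg; intros; apply Rabs_pos).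
    nra.
Qed.

Lemma loc_abs_cont_const k : loc_abs_cont (fun _ => k).
Proof.
  intros a b Hab e He. exists 1. split; [lra|]. intros n c d _ _ _.
  rewrite (rsum_ext _ (fun _ => 0)) by (intros; rewrite Rminus_diag, Rabs_R0; auto).
  enough (rsum (fun _ => 0) n = 0) by lra.
  induction n; simpl; lra.
Qed.

Lemma loc_abs_cont_id : loc_abs_cont (fun t => t).
Proof.
  intros a b Hab e He. exists e. split; [lra|]. intros n c d H _ Hs.
  rewrite (rsum_ext _ (fun i => d i - c i)); auto.
  intros i Hi. destruct (H i Hi). rewrite Rabs_right; lra.
Qed.

Lemma loc_abs_cont_plus f g :
  loc_abs_cont f -> loc_abs_cont g -> loc_abs_cont (fun t => f t + g t).
Proof.
  intros Hf Hg a b Hab. apply (abs_cont_on_dominated _ f g a b 1 1); auto; try lra.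
  intros. replace (f d + g d - (f c + g c)) with ((f d - f c) + (g d - g c)) by ring.
  rewrite Rmult_1_l. apply Rabs_triang.
Qed.

Lemma loc_abs_cont_opp f : loc_abs_cont f -> loc_abs_cont (fun t => - f t).
Proof.
  intros Hf a b Hab. apply (abs_cont_on_dominated _ f f a b 1 1); auto; try lra.
  intros. replace (- f d - - f c) with (- (f d - f c)) by ring. rewrite Rabs_Ropp.
  pose proof (Rabs_pos (f d - f c)). lra.
Qed.

Lemma loc_abs_cont_minus f g :
  loc_abs_cont f -> loc_abs_cont g -> loc_abs_cont (fun t => f t - g t).
Proof. intros Hf Hg. apply (loc_abs_cont_plus f (fun t => - g t)), loc_abs_cont_opp; auto. Qed.

Lemma loc_abs_cont_mult f g :
  loc_abs_cont f -> loc_abs_cont g -> loc_abs_cont (fun t => f t * g t).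
Proof.
  intros Hf Hg a b Hab.
  destruct (continuity_bounded f a b (loc_abs_cont_continuity f Hf) Hab) as [M1 HM1].
  destruct (continuity_bounded g a b (loc_abs_cont_continuity g Hg) Hab) as [M2 HM2].
  assert (0 <= M1) by (eapply Rle_trans; [apply Rabs_pos|apply (HM1 a); lra]).
  assert (0 <= M2) by (eapply Rle_trans; [apply Rabs_pos|apply (HM2 a); lra]).
  apply (abs_cont_on_dominated _ f g a b 1 (M1 + M2)); auto; try lra.
  intros c d Hc Hcd Hd _.
  replace (f d * g d - f c * g c) with (f d * (g d - g c) + g c * (f d - f c)) by ring.
  eapply Rle_trans; [apply Rabs_triang|]. rewrite !Rabs_mult.
  specialize (HM1 d ltac:(lra)). specialize (HM2 c ltac:(lra)).
  pose proof (Rabs_pos (f d - f c)). pose proof (Rabs_pos (g d - g c)).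
  pose proof (Rabs_pos (f d)). pose proof (Rabs_pos (g c)).
  nra.
Qed.

Lemma loc_abs_cont_sq f : loc_abs_cont f -> loc_abs_cont (fun t => f t ^ 2).
Proof.
  intros Hf. replace (fun t => f t ^ 2) with (fun t => f t * f t)
    by (extensionality t; ring).
  apply loc_abs_cont_mult; auto.
Qed.

Ltac solve_loc_abs_cont :=
  repeat first [ apply loc_abs_cont_minus | apply loc_abs_cont_plus | apply loc_abs_cont_opp
  | apply loc_abs_cont_mult | apply loc_abs_cont_sq | apply loc_abs_cont_const
  | apply loc_abs_cont_id | assumption ].

Lemma loc_abs_cont_ae_deriv0_const (f : R -> R) : loc_abs_cont f ->
  ae (fun t => derivable_pt_lim f t 0) -> forall t, f t = f 0.
Proof.
  intros Hac Hae.
  assert (W : forall s t, s <= t -> f s = f t).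
  { intros s t Hst.
    assert (Rabs (f t - f s) <= 0 * (t - s)).
    { apply abs_cont_mean_value_ineq; auto; try lra. eapply negligible_sub; [|exact Hae].
      intros u [_ Hu] Hd. apply Hu. exists 0. rewrite Rabs_R0. split; auto; lra. }
    pose proof (Rabs_pos (f t - f s)).
    destruct (Rcase_abs (f t - f s));
      [rewrite Rabs_left in *|rewrite Rabs_right in *]; lra. }
  intros t. destruct (Rle_dec t 0); [|symmetry]; apply W; lra.
Qed.

Lemma cont_pt_eps f t e : continuity_pt f t -> 0 < e -> exists d, 0 < d /\
  forall u, Rabs (u - t) < d -> Rabs (f u - f t) < e.
Proof.
  intros Hc He. destruct (Hc e He) as [d [Hd H]]. exists d. split; [lra|]. intros u Hu.
  destruct (Req_dec u t) as [->|]; [rewrite Rminus_diag, Rabs_R0; lra|].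
  apply (H u). split; [split; [exact I|auto]|exact Hu].
Qed.

Lemma derivable_pt_lim_value f t l l' :
  derivable_pt_lim f t l -> l = l' -> derivable_pt_lim f t l'.
Proof. intros H <-. exact H. Qed.

Lemma derivable_pt_lim_sq f t a : derivable_pt_lim f t a ->
  derivable_pt_lim (fun s => f s ^ 2) t (a * f t + f t * a).
Proof.
  intros. apply derivable_pt_lim_ext with (fun s => f s * f s); [intros; ring|].
  apply derivable_pt_lim_mult; auto.
Qed.

(* Leaves the goal [computed derivative = claimed derivative]. *)
Ltac derive :=
  eapply derivable_pt_lim_value;
  [ repeat first [ apply derivable_pt_lim_minus | apply derivable_pt_lim_plus
    | apply derivable_pt_lim_opp | apply derivable_pt_lim_sq | apply derivable_pt_lim_mult
    | apply derivable_pt_lim_const | apply derivable_pt_lim_id | eassumption ]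
  | cbv beta ].

(* Apply the mean value inequality to [f u - G t u] near [t]. *)
Lemma loc_abs_cont_derivable_of_ae (f G : R -> R) : loc_abs_cont f -> continuity G ->
  ae (fun t => derivable_pt_lim f t (G t)) -> forall t, derivable_pt_lim f t (G t).
Proof.
  intros Hac HG Hae t e He.
  destruct (cont_pt_eps G t (e / 2) (HG t) ltac:(lra)) as [d [Hd Hc]].
  exists (mkposreal d Hd). intros h Hh Hhd. simpl in Hhd.
  set (Phi := fun u => f u - G t * u).
  assert (LPhi : loc_abs_cont Phi) by (unfold Phi; solve_loc_abs_cont).
  assert (Hneg : forall a b, t - d < a -> b < t + d ->
    negligible (fun u => a <= u <= b /\ ~ (exists l, derivable_pt_lim Phi u l /\ Rabs l <= e / 2))).
  { intros a b Ha Hb. eapply negligible_sub; [|exact Hae]. intros u [Hu Hn] Hdu. apply Hn.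
    exists (G u - G t). split.
    - unfold Phi. derive. ring.
    - apply Rlt_le, Hc. unfold Rabs in *; repeat destruct Rcase_abs; lra. }
  assert (Key : Rabs (Phi (t + h) - Phi t) <= e / 2 * Rabs h).
  { unfold Rabs in Hhd. destruct (Rle_dec 0 h).
    - rewrite (Rabs_right h) by lra. replace (e / 2 * h) with (e / 2 * ((t + h) - t)) by ring.
      apply abs_cont_mean_value_ineq; try lra; [apply LPhi; lra|].
      apply Hneg; destruct Rcase_abs; lra.
    - rewrite (Rabs_left h), <- Rabs_Ropp, Ropp_minus_distr by lra.
      replace (e / 2 * - h) with (e / 2 * (t - (t + h))) by ring.
      apply abs_cont_mean_value_ineq; try lra; [apply LPhi; lra|].
      apply Hneg; destruct Rcase_abs; lra. }
  unfold Phi in Key.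
  replace ((f (t + h) - f t) / h - G t) with
    ((f (t + h) - G t * (t + h) - (f t - G t * t)) / h) by (field; auto).
  assert (0 < Rabs h) by (apply Rabs_pos_lt; auto).
  unfold Rdiv. rewrite Rabs_mult, Rabs_inv.
  apply Rle_lt_trans with (e / 2 * Rabs h * / Rabs h).
  - apply Rmult_le_compat_r; [left; apply Rinv_0_lt_compat; auto|exact Key].
  - field_simplify; lra.
Qed.

(** * Continuous angle functions *)

Lemma polar_sq rho a : (rho * cos a) ^ 2 + (rho * sin a) ^ 2 = rho ^ 2.
Proof.
  pose proof (sin2_cos2 a) as E. unfold Rsqr in E.
  replace ((rho * cos a) ^ 2 + (rho * sin a) ^ 2) with
    (rho ^ 2 * (sin a * sin a + cos a * cos a)) by ring.
  rewrite E. ring.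
Qed.

Lemma sin_ge_half x : 0 <= x <= 1 -> x / 2 <= sin x.
Proof.
  intros H. assert (HP : 1 < PI) by (pose proof PI2_1; lra).
  destruct (sin_bound x 0 ltac:(lra) ltac:(lra)) as [A _].
  unfold sin_approx, sin_term in A. simpl in A. nra.
Qed.

Lemma Rabs_le_2_Rabs_sin x : Rabs x <= 1 -> Rabs x <= 2 * Rabs (sin x).
Proof.
  intros H. destruct (Rle_dec 0 x).
  - rewrite Rabs_right in * by lra. pose proof (sin_ge_half x ltac:(lra)).
    rewrite Rabs_right; lra.
  - rewrite Rabs_left in * by lra. pose proof (sin_ge_half (- x) ltac:(lra)).
    rewrite sin_neg in *. rewrite Rabs_left1; lra.
Qed.

(* [rc rd sin (b - a)] is the cross product of the two polar points, which is linear in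
   their difference. *)
Lemma angle_increment_le (rc rd a b m M : R) : 0 < m -> 0 < rc -> 0 < rd ->
  m <= rc ^ 2 -> m <= rd ^ 2 -> Rabs (b - a) <= 1 ->
  Rabs (rc * cos a) + Rabs (rc * sin a) <= M ->
  Rabs (b - a) <=
    2 * M / m * (Rabs (rd * cos b - rc * cos a) + Rabs (rd * sin b - rc * sin a)).
Proof.
  intros Hm Hrc Hrd Hmc Hmd Hba HM.
  set (X := Rabs (rd * cos b - rc * cos a) + Rabs (rd * sin b - rc * sin a)).
  assert (Hcross : rc * rd * sin (b - a) =
    rc * cos a * (rd * sin b - rc * sin a) - rc * sin a * (rd * cos b - rc * cos a))
    by (rewrite sin_minus; ring).
  assert (HmR : m <= rc * rd).
  { destruct (Rle_dec m (rc * rd)) as [|Hlt]; auto.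
    assert (0 < rc * rd) by nra. nra. }
  assert (HS : rc * rd * Rabs (sin (b - a)) <= M * X).
  { replace (rc * rd * Rabs (sin (b - a))) with (Rabs (rc * rd * sin (b - a)))
      by (rewrite Rabs_mult, Rabs_right; nra).
    rewrite Hcross. unfold X in *.
    set (A := rc * cos a) in *. set (B := rc * sin a) in *.
    set (P := rd * sin b - B). set (Q := rd * cos b - A).
    eapply Rle_trans; [apply Rabs_triang|]. rewrite Rabs_Ropp, !Rabs_mult.
    pose proof (Rabs_pos P). pose proof (Rabs_pos Q).
    pose proof (Rabs_pos A). pose proof (Rabs_pos B). nra. }
  pose proof (Rabs_le_2_Rabs_sin _ Hba). pose proof (Rabs_pos (sin (b - a))).
  apply (Rmult_le_reg_l m); auto.
  replace (m * (2 * M / m * X)) with (2 * (M * X)) by (field; lra).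
  nra.
Qed.

Lemma derivable_pt_lim_asin_0 : derivable_pt_lim asin 0 1.
Proof.
  apply (derive_pt_eq_1 _ _ _ (derivable_pt_asin 0 ltac:(lra))).
  rewrite derive_pt_asin, Rsqr_0, Rminus_0_r, sqrt_1. field.
Qed.

Section Angle.

Variables h1 h2 th r : R -> R.
Hypothesis r_pos : forall s, 0 < r (th s).
Hypothesis h_polar : forall s, h1 s = r (th s) * cos (th s) /\ h2 s = r (th s) * sin (th s).

Lemma h_norm_sq s : h1 s ^ 2 + h2 s ^ 2 = r (th s) ^ 2.
Proof. destruct (h_polar s) as [-> ->]. apply polar_sq. Qed.

Lemma h_norm_sq_pos s : 0 < h1 s ^ 2 + h2 s ^ 2.
Proof. rewrite h_norm_sq. pose proof (r_pos s). nra. Qed.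

(* Near [t], [th] is [th t + asin] of the (normalised) cross product of [h t] and [h s]. *)
Lemma angle_derivable_pt_lim t d1 d2 :
  continuity_pt th t -> derivable_pt_lim h1 t d1 -> derivable_pt_lim h2 t d2 ->
  derivable_pt_lim th t ((h1 t * d2 - h2 t * d1) / (h1 t ^ 2 + h2 t ^ 2)).
Proof.
  intros Hc D1 D2.
  assert (Hsq : forall s, sqrt (h1 s ^ 2 + h2 s ^ 2) = r (th s))
    by (intros s; rewrite h_norm_sq; apply sqrt_pow2, Rlt_le, r_pos).
  set (q := fun s => (h1 t * h2 s - h2 t * h1 s) /
    (sqrt (h1 t ^ 2 + h2 t ^ 2) * sqrt (h1 s ^ 2 + h2 s ^ 2))).
  assert (Hq : forall s, q s = sin (th s - th t)).
  { intros s. unfold q. rewrite !Hsq.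
    destruct (h_polar s) as [-> ->]. destruct (h_polar t) as [-> ->].
    rewrite sin_minus. pose proof (r_pos s). pose proof (r_pos t). field. lra. }
  pose proof (h_norm_sq_pos t) as Hpos.
  pose proof (sqrt_lt_R0 _ Hpos) as Hsqrt_pos.
  assert (Dnorm : derivable_pt_lim (fun s => sqrt (h1 s ^ 2 + h2 s ^ 2)) t
    (/ (2 * sqrt (h1 t ^ 2 + h2 t ^ 2)) * ((d1 * h1 t + h1 t * d1) + (d2 * h2 t + h2 t * d2)))).
  { apply (derivable_pt_lim_comp (fun s => h1 s ^ 2 + h2 s ^ 2) sqrt);
      [|apply derivable_pt_lim_sqrt, Hpos].
    apply derivable_pt_lim_plus; apply derivable_pt_lim_sq; auto. }
  destruct (cont_pt_eps th t 1 Hc ltac:(lra)) as [rho [Hrho Hrh]].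
  apply derivable_pt_lim_locally_ext with (fun s => th t + asin (q s)) (t - rho) (t + rho).
  { lra. }
  { intros s Hs. rewrite Hq, asin_sin; [ring|].
    assert (Rabs (s - t) < rho) by (unfold Rabs; destruct Rcase_abs; lra).
    specialize (Hrh s ltac:(assumption)). pose proof PI2_1.
    revert Hrh. unfold Rabs; destruct Rcase_abs; lra. }
  eapply derivable_pt_lim_value.
  - apply derivable_pt_lim_plus; [apply derivable_pt_lim_const|].
    apply derivable_pt_lim_comp.
    + apply derivable_pt_lim_div.
      * apply derivable_pt_lim_minus; apply derivable_pt_lim_mult;
          try apply derivable_pt_lim_const; eauto.
      * apply derivable_pt_lim_mult; [apply derivable_pt_lim_const|exact Dnorm].
      * apply Rgt_not_eq, Rmult_lt_0_compat; lra.
    + rewrite Hq, Rminus_diag, sin_0. apply derivable_pt_lim_asin_0.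
  - cbv beta. replace (h1 t * h2 t - h2 t * h1 t) with 0 by ring.
    pose proof (sqrt_sqrt _ (Rlt_le _ _ Hpos)) as E.
    set (sH := sqrt (h1 t ^ 2 + h2 t ^ 2)) in *. rewrite <- E. unfold Rsqr. field. lra.
Qed.

Lemma angle_loc_abs_cont :
  continuity th -> loc_abs_cont h1 -> loc_abs_cont h2 -> loc_abs_cont th.
Proof.
  intros Hc L1 L2 a b Hab.
  destruct (Heine th (fun c => a <= c <= b) (compact_P3 a b) (fun s _ => Hc s)
    (mkposreal 1 Rlt_0_1)) as [[rho Hrho] Hu]. simpl in Hu.
  destruct (continuity_bounded h1 a b (loc_abs_cont_continuity _ L1) Hab) as [M1 HM1].
  destruct (continuity_bounded h2 a b (loc_abs_cont_continuity _ L2) Hab) as [M2 HM2].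
  assert (LH : loc_abs_cont (fun s => h1 s ^ 2 + h2 s ^ 2)) by solve_loc_abs_cont.
  destruct (continuity_ab_min _ a b Hab (fun c _ => loc_abs_cont_continuity _ LH c))
    as [mx [Hmx _]].
  pose proof (h_norm_sq_pos mx) as HmH.
  set (mH := h1 mx ^ 2 + h2 mx ^ 2) in *.
  assert (0 <= M1) by (eapply Rle_trans; [apply Rabs_pos|apply (HM1 a); lra]).
  assert (0 <= M2) by (eapply Rle_trans; [apply Rabs_pos|apply (HM2 a); lra]).
  apply (abs_cont_on_dominated th h1 h2 a b rho (2 * (M1 + M2) / mH)); try apply L1;
    try apply L2; auto.
  { apply Rmult_le_pos; [lra|]. left. apply Rinv_0_lt_compat; auto. }
  intros c d Hac Hcd Hdb Hdc.
  destruct (h_polar c) as [Ec1 Ec2]. destruct (h_polar d) as [Ed1 Ed2].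
  rewrite Ec1, Ec2, Ed1, Ed2.
  apply angle_increment_le; try apply r_pos; auto.
  - rewrite <- h_norm_sq. apply Hmx. lra.
  - rewrite <- h_norm_sq. apply Hmx. lra.
  - left. rewrite <- Rabs_Ropp, Ropp_minus_distr. apply Hu; try lra.
    rewrite Rabs_left1; lra.
  - rewrite <- Ec1, <- Ec2. specialize (HM1 c ltac:(lra)). specialize (HM2 c ltac:(lra)). lra.
Qed.

End Angle.

(** * Normal extremals *)

Section NormalExtremal.

Variables x y z v u1 u2 p1 p2 p3 p4 : R -> R.

Let h1 t := ham1 (p1 t) (p3 t) (p4 t) (x t) (y t) (z t).
Let h2 t := ham2 (p2 t) (p3 t) (p4 t) (x t).

Definition extremal_equations_at (t : R) : Prop :=
  derivable_pt_lim x t (u1 t) /\ derivable_pt_lim y t (u2 t) /\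
  derivable_pt_lim z t (/2 * (x t * u2 t - y t * u1 t)) /\
  derivable_pt_lim v t (- (/2 * (z t + /6 * x t * y t)) * u1 t + /12 * x t ^ 2 * u2 t) /\
  derivable_pt_lim p1 t (/12 * p4 t * y t * u1 t - (/2 * p3 t + /6 * p4 t * x t) * u2 t) /\
  derivable_pt_lim p2 t ((/2 * p3 t + /12 * p4 t * x t) * u1 t) /\
  derivable_pt_lim p3 t (/2 * p4 t * u1 t) /\ derivable_pt_lim p4 t 0 /\
  h1 t * u1 t + h2 t * u2 t = 1.

Hypothesis extremal_ae : ae extremal_equations_at.
Hypotheses (x0 : x 0 = 0) (y0 : y 0 = 0) (z0 : z 0 = 0) (v0 : v 0 = 0).
Hypotheses (Lx : loc_abs_cont x) (Ly : loc_abs_cont y) (Lz : loc_abs_cont z)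
  (Lv : loc_abs_cont v).
Hypotheses (L1 : loc_abs_cont p1) (L2 : loc_abs_cont p2) (L3 : loc_abs_cont p3)
  (L4 : loc_abs_cont p4).

Let f1 := p1 0.
Let f2 := p2 0.
Let f3 := p3 0.
Let f4 := p4 0.

Lemma p4_const t : p4 t = f4.
Proof.
  apply loc_abs_cont_ae_deriv0_const; auto.
  eapply ae_mono; [|exact extremal_ae]. intros s Hs. apply Hs.
Qed.

Lemma p3_eq t : p3 t = f3 + /2 * f4 * x t.
Proof.
  enough (E : p3 t - /2 * f4 * x t = p3 0 - /2 * f4 * x 0) by (rewrite x0 in E; unfold f3; lra).
  apply (loc_abs_cont_ae_deriv0_const (fun t => p3 t - /2 * f4 * x t));
    [solve_loc_abs_cont|].
  eapply ae_mono; [|exact extremal_ae]. intros s (Dx & _ & _ & _ & _ & _ & D3 & _).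
  derive. rewrite p4_const. ring.
Qed.

Lemma p2_eq t : p2 t = f2 + /2 * f3 * x t + /6 * f4 * x t ^ 2.
Proof.
  enough (E : p2 t - /2 * f3 * x t - /6 * f4 * x t ^ 2 =
              p2 0 - /2 * f3 * x 0 - /6 * f4 * x 0 ^ 2) by (rewrite x0 in E; unfold f2; lra).
  apply (loc_abs_cont_ae_deriv0_const
    (fun t => p2 t - /2 * f3 * x t - /6 * f4 * x t ^ 2)); [solve_loc_abs_cont|].
  eapply ae_mono; [|exact extremal_ae]. intros s (Dx & _ & _ & _ & _ & D2 & _).
  derive. rewrite p4_const, p3_eq. field.
Qed.

Lemma p1_eq t : p1 t = f1 - /2 * f3 * y t - /6 * f4 * (x t * y t + 3 * z t).
Proof.
  enough (E : p1 t + /2 * f3 * y t + /6 * f4 * (x t * y t + 3 * z t) =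
              p1 0 + /2 * f3 * y 0 + /6 * f4 * (x 0 * y 0 + 3 * z 0))
    by (rewrite x0, y0, z0 in E; unfold f1; lra).
  apply (loc_abs_cont_ae_deriv0_const
    (fun t => p1 t + /2 * f3 * y t + /6 * f4 * (x t * y t + 3 * z t))); [solve_loc_abs_cont|].
  eapply ae_mono; [|exact extremal_ae]. intros s (Dx & Dy & Dz & _ & D1 & _).
  derive. rewrite p4_const, p3_eq. field.
Qed.

Lemma h1_eq t : h1 t = f1 - (f3 + /2 * f4 * x t) * y t - f4 * z t.
Proof. unfold h1, ham1. rewrite p1_eq, p3_eq, p4_const. field. Qed.

Lemma h2_eq t : h2 t = f2 + (f3 + /2 * f4 * x t) * x t.
Proof. unfold h2, ham2. rewrite p2_eq, p3_eq, p4_const. field. Qed.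

Lemma h_derivatives_ae :
  ae (fun t => derivable_pt_lim h1 t (- (f3 + f4 * x t) * u2 t) /\
               derivable_pt_lim h2 t ((f3 + f4 * x t) * u1 t)).
Proof.
  eapply ae_mono; [|exact extremal_ae]. intros t (Dx & Dy & Dz & _). split.
  - apply derivable_pt_lim_ext with (fun s => f1 - (f3 + /2 * f4 * x s) * y s - f4 * z s).
    { intros s. symmetry. apply h1_eq. }
    derive. field.
  - apply derivable_pt_lim_ext with (fun s => f2 + (f3 + /2 * f4 * x s) * x s).
    { intros s. symmetry. apply h2_eq. }
    derive. field.
Qed.

Lemma h2_first_integral t : /2 * (f3 + f4 * x t) ^ 2 - f4 * h2 t = /2 * f3 ^ 2 - f2 * f4.
Proof. rewrite h2_eq. field. Qed.

(* The derivative of the left-hand side is [h1 u1 + h2 u2 - 1], which vanishes a.e. *)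
Lemma time_identity t :
  f1 * x t + f2 * y t + (2 * f3 + /2 * f4 * x t) * z t + 3 * f4 * v t = t.
Proof.
  set (g := fun t => f1 * x t + f2 * y t + (2 * f3 + /2 * f4 * x t) * z t + 3 * f4 * v t - t).
  enough (E : g t = g 0) by (unfold g in E; rewrite x0, y0, z0, v0 in E; lra).
  apply loc_abs_cont_ae_deriv0_const; [unfold g; solve_loc_abs_cont|].
  eapply ae_mono; [|exact extremal_ae]. intros s (Dx & Dy & Dz & Dv & _ & _ & _ & _ & Hh).
  rewrite h1_eq, h2_eq in Hh. unfold g. derive. lra.
Qed.

Lemma h1_loc_abs_cont : loc_abs_cont h1.
Proof.
  replace h1 with (fun s => f1 - (f3 + /2 * f4 * x s) * y s - f4 * z s)
    by (extensionality s; symmetry; apply h1_eq).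
  solve_loc_abs_cont.
Qed.

Lemma h2_loc_abs_cont : loc_abs_cont h2.
Proof.
  replace h2 with (fun s => f2 + (f3 + /2 * f4 * x s) * x s)
    by (extensionality s; symmetry; apply h2_eq).
  solve_loc_abs_cont.
Qed.

Lemma angle_velocity (r th : R -> R) :
  (forall a, 0 < r a) -> continuity th ->
  (forall t, h1 t = r (th t) * cos (th t) /\ h2 t = r (th t) * sin (th t)) ->
  exists dth : R -> R,
    continuity dth /\
    forall t, derivable_pt_lim th t (dth t) /\
      f3 + f4 * x t = r (th t) ^ 2 * dth t /\
      dth t ^ 2 = (f3 ^ 2 + 2 * f4 * (r (th t) * sin (th t) - f2)) / r (th t) ^ 4.
Proof.
  intros Hr Hc Hpolar.
  assert (Hr' : forall s, 0 < r (th s)) by (intro s; apply Hr).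
  pose proof (h_norm_sq h1 h2 th r Hpolar) as HH.
  pose proof (h_norm_sq_pos h1 h2 th r Hr' Hpolar) as Hpos.
  set (dth := fun t => (f3 + f4 * x t) / (h1 t ^ 2 + h2 t ^ 2)).
  assert (Hcont : continuity dth).
  { intro t. apply continuity_pt_div; [| |apply Rgt_not_eq, Hpos];
      apply loc_abs_cont_continuity; solve_loc_abs_cont. }
  assert (Hder : forall t, derivable_pt_lim th t (dth t)).
  { apply loc_abs_cont_derivable_of_ae; auto.
    - apply (angle_loc_abs_cont h1 h2 th r); auto using h1_loc_abs_cont, h2_loc_abs_cont.
    - eapply ae_mono; [|exact (ae_and _ _ extremal_ae h_derivatives_ae)].
      intros t [(_ & _ & _ & _ & _ & _ & _ & _ & Hh) [Dh1 Dh2]].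
      eapply derivable_pt_lim_value;
        [exact (angle_derivable_pt_lim h1 h2 th r Hr' Hpolar t _ _ (Hc t) Dh1 Dh2)|].
      unfold dth, Rdiv. f_equal.
      replace (h1 t * ((f3 + f4 * x t) * u1 t) - h2 t * (- (f3 + f4 * x t) * u2 t)) with
        ((f3 + f4 * x t) * (h1 t * u1 t + h2 t * u2 t)) by ring.
      rewrite Hh. ring. }
  exists dth. split; [exact Hcont|]. intro t. split; [apply Hder|].
  pose proof (Hpos t). split.
  - rewrite <- HH. unfold dth. field. lra.
  - destruct (Hpolar t) as [_ <-].
    replace (r (th t) ^ 4) with ((h1 t ^ 2 + h2 t ^ 2) ^ 2) by (rewrite HH; ring).
    pose proof (h2_first_integral t).
    replace (f3 ^ 2 + 2 * f4 * (h2 t - f2)) with ((f3 + f4 * x t) ^ 2) by lra.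
    unfold dth. field. lra.
Qed.

End NormalExtremal.

Theorem mainTheorem2
  (F : R -> R -> R) (HF : is_norm2 F)
  (x y z v u1 u2 p1 p2 p3 p4 : R -> R)
  (* admissible control: u(t) in U for a.e. t *)
  (Hu : ae (fun t => F (u1 t) (u2 t) <= 1))
  (* trajectory from the identity, absolutely continuous, solving the system a.e. *)
  (H0 : x 0 = 0 /\ y 0 = 0 /\ z 0 = 0 /\ v 0 = 0)
  (Hac : loc_abs_cont x /\ loc_abs_cont y /\ loc_abs_cont z /\ loc_abs_cont v)
  (Hx : ae (fun t => derivable_pt_lim x t (u1 t)))
  (Hy : ae (fun t => derivable_pt_lim y t (u2 t)))
  (Hz : ae (fun t => derivable_pt_lim z t (/2 * (x t * u2 t - y t * u1 t))))
  (Hv : ae (fun t => derivable_pt_lim v t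
          (- (/2 * (z t + /6 * x t * y t)) * u1 t + /12 * x t ^ 2 * u2 t)))
  (* nowhere vanishing absolutely continuous covector solving the adjoint system a.e. *)
  (Hpac : loc_abs_cont p1 /\ loc_abs_cont p2 /\ loc_abs_cont p3 /\ loc_abs_cont p4)
  (Hpnz : forall t, ~ (p1 t = 0 /\ p2 t = 0 /\ p3 t = 0 /\ p4 t = 0))
  (Hp1 : ae (fun t => derivable_pt_lim p1 t
          (/12 * p4 t * y t * u1 t - (/2 * p3 t + /6 * p4 t * x t) * u2 t)))
  (Hp2 : ae (fun t => derivable_pt_lim p2 t ((/2 * p3 t + /12 * p4 t * x t) * u1 t)))
  (Hp3 : ae (fun t => derivable_pt_lim p3 t (/2 * p4 t * u1 t)))
  (Hp4 : ae (fun t => derivable_pt_lim p4 t 0))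
  (* maximum condition, normal case M = 1 *)
  (Hmax : ae (fun t =>
     let h1 := ham1 (p1 t) (p3 t) (p4 t) (x t) (y t) (z t) in
     let h2 := ham2 (p2 t) (p3 t) (p4 t) (x t) in
     h1 * u1 t + h2 * u2 t = 1 /\ FU_is F h1 h2 1)) :
  let f1 := p1 0 in let f2 := p2 0 in let f3 := p3 0 in let f4 := p4 0 in
  let h1 := fun t => ham1 (p1 t) (p3 t) (p4 t) (x t) (y t) (z t) in
  let h2 := fun t => ham2 (p2 t) (p3 t) (p4 t) (x t) in
  (* (i) *)
  (forall t,
     p4 t = f4 /\
     p3 t = f3 + /2 * f4 * x t /\
     p2 t = f2 + /2 * f3 * x t + /6 * f4 * x t ^ 2 /\
     p1 t = f1 - /2 * f3 * y t - /6 * f4 * (x t * y t + 3 * z t) /\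
     h1 t = f1 - (f3 + /2 * f4 * x t) * y t - f4 * z t /\
     h2 t = f2 + (f3 + /2 * f4 * x t) * x t) /\
  (* (ii) *)
  ae (fun t => derivable_pt_lim h1 t (- (f3 + f4 * x t) * u2 t) /\
               derivable_pt_lim h2 t ((f3 + f4 * x t) * u1 t)) /\
  (forall t, /2 * (f3 + f4 * x t) ^ 2 - f4 * h2 t = /2 * f3 ^ 2 - f2 * f4) /\
  (* (iii) *)
  (forall t, f1 * x t + f2 * y t + (2 * f3 + /2 * f4 * x t) * z t + 3 * f4 * v t = t) /\
  (* (iv) *)
  (forall (r th : R -> R),
     (forall a, 0 < r a /\ FU_is F (r a * cos a) (r a * sin a) 1) ->
     continuity th ->
     (forall t, h1 t = r (th t) * cos (th t) /\ h2 t = r (th t) * sin (th t)) ->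
     exists dth : R -> R,
       continuity dth /\
       forall t, derivable_pt_lim th t (dth t) /\
         f3 + f4 * x t = r (th t) ^ 2 * dth t /\
         dth t ^ 2 = (f3 ^ 2 + 2 * f4 * (r (th t) * sin (th t) - f2)) / r (th t) ^ 4).
Proof.
  intros f1 f2 f3 f4 h1 h2.
  destruct H0 as (x0 & y0 & z0 & v0). destruct Hac as (Lx & Ly & Lz & Lv).
  destruct Hpac as (L1 & L2 & L3 & L4).
  assert (Hsys : ae (extremal_equations_at x y z v u1 u2 p1 p2 p3 p4)).
  { unfold extremal_equations_at. repeat apply ae_and; auto.
    eapply ae_mono; [|exact Hmax]. intros t [Hn _]. exact Hn. }
  split; [|split; [|split; [|split]]].
  - intro t. repeat split; [eapply p4_const | eapply p3_eq | eapply p2_eq | eapply p1_eq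
                           | eapply h1_eq | eapply h2_eq]; eauto.
  - eapply h_derivatives_ae; eauto.
  - intro t. eapply h2_first_integral; eauto.
  - intro t. eapply time_identity; eauto.
  - intros r th Hr. eapply angle_velocity; eauto. intro a. apply Hr.
Qed.
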